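(* For every real $p>1$, the $p$-geometric rule satisfies $\kappa$-group representation for $\kappa(\alpha,\lambda)=\lceil\frac{p^{\lambda+1}}{\alpha(p-1)}\rceil$. That is, for every rational $\alpha\in(0,1]$, every $\lambda\in\mathbb N$, every profile $P$, every ranking $r$ that the $p$-geometric rule may output on $P$ (under any tie-breaking), and every group $N'$ that is $(\alpha,\lambda)$-significant in $P$, we have $\mathrm{avg}(N',r_{\le k})\ge\lambda$ where $k=\lceil\frac{p^{\lambda+1}}{\alpha(p-1)}\rceil$.
   Context: Let $N=[n]$ be a finite set of voters and $A$ a finite set of $m$ alternatives; a profile $P=(A_1,\dots,A_n)$ gives each voter $i$ a non-empty approval set $A_i\subseteq A$. A ranking $r=(r_1,\dots,r_m)$ is a linear order of $A$, $r_{\le k}=\{r_1,\dots,r_k\}$, with $r_{\le k}=A$ for $k\ge m$. For nonempty $N'\subseteq N$ and $S\subseteq A$, $\mathrm{avg}(N',S)=\frac1{|N'|}\sum_{i\in N'}|A_i\cap S|$. The cohesiveness of $N'$ is $\lambda(N')=|\bigcap_{i\in N'}A_i|$; $N'$ is $(\alpha,\lambda)$-significant in $P$ if $|N'|=\lceil\alpha n\rceil$ and $\lambda(N')\ge\lambda$. For a weight vector $\mathbf w=(w_1,w_2,\dots)$ of nonnegative reals and $S\subseteq A$, let $w(S)=\sum_{i\in N}\sum_{j=1}^{|A_i\cap S|}w_j$. The rule $\mathbf w$-RAV builds $r$ iteratively from the empty ranking: at step $k\in[m]$ it appends an unranked alternative $a$ maximizing $w(r_{\le k-1}\cup\{a\})-w(r_{\le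 k-1})$ (ties broken arbitrarily). The $p$-geometric rule is $\mathbf w$-RAV with $\mathbf w=(\frac1p,\frac1{p^2},\frac1{p^3},\dots)$. *)

From HB Require Import structures.
From mathcomp Require Import all_boot all_order all_algebra.
Set Implicit Arguments. Unset Strict Implicit. Unset Printing Implicit Defensive.
Import Order.TTheory GRing.Theory Num.Theory.
Local Open Scope ring_scope.

(* Voters are 'I_n, alternatives form a finType A, a profile gives each voter
   an approval set. *)
Definition profile (n : nat) (A : finType) := 'I_n -> {set A}.

Definition valid_profile n (A : finType) (P : profile n A) : Prop :=
  forall i : 'I_n, P i != set0.

(* A ranking is a linear order of A: a duplicate-free sequence listing all of A. *)
Definition is_ranking (A : finType) (r : seq A) : Prop :=
  uniq r /\ size r = #|A|.

(* r_{<= k}; equals A when k >= m for a ranking *)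
Definition prefix_set (A : finType) (r : seq A) (k : nat) : {set A} :=
  [set x in take k r].

Definition avg (R : numFieldType) n (A : finType) (P : profile n A)
  (N' : {set 'I_n}) (S : {set A}) : R :=
  (\sum_(i in N') #|P i :&: S|)%:R / #|N'|%:R.

Definition cohesiveness n (A : finType) (P : profile n A) (N' : {set 'I_n}) : nat :=
  #|\bigcap_(i in N') P i|.

Definition significant n (A : finType) (P : profile n A) (alpha : rat) (lambda : nat)
  (N' : {set 'I_n}) : Prop :=
  (#|N'| : int) = Num.ceil (alpha * n%:R) /\ (lambda <= cohesiveness P N')%N.

(* w(S) = sum_i sum_{j=1}^{|A_i cap S|} w_j ; the weight vector is w : nat -> R,
   with w j = w_j for j >= 1 (w 0 is unused). *)
Definition wscore (R : numDomainType) n (A : finType) (w : nat -> R) (P : profile n A)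
  (S : {set A}) : R :=
  \sum_(i < n) \sum_(1 <= j < #|P i :&: S|.+1) w j.

(* r is a possible output of w-RAV on P (under some tie-breaking): at each step
   k in [m] (here 0-indexed: step k.+1 appends nth k), the appended alternative
   maximizes the marginal gain among the unranked alternatives. *)
Definition wRAV_output (R : numDomainType) n (A : finType) (w : nat -> R)
  (P : profile n A) (r : seq A) : Prop :=
  is_ranking r /\
  forall (k : nat) (Hk : (k < size r)%N) (x0 : A) (a : A),
    a \notin take k r ->
    wscore w P (prefix_set r k :|: [set a]) - wscore w P (prefix_set r k)
    <= wscore w P (prefix_set r k :|: [set nth x0 r k]) - wscore w P (prefix_set r k).

Definition geom_weights (R : numFieldType) (p : R) : nat -> R := fun j => (p ^+ j)^-1.

(* Suppose the prefix r_{<=k} gave N' an average below lambda.  Some alternative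
   c approved by all of N' is then still unranked after k steps, and since the
   members of N' approve fewer than lambda |N'| alternatives of every earlier
   prefix, convexity of j |-> p^-(j+1) makes the marginal gain of c, hence of
   every alternative chosen during the first k steps, at least |N'| p^-(lambda+1).
   So w(r_{<=k}) >= k |N'| p^-(lambda+1) >= n/(p-1) by the choice of k, whereas
   each voter contributes less than sum_j p^-j = 1/(p-1). *)

From HB Require Import structures.
From mathcomp Require Import all_boot all_order all_algebra.
From mathcomp Require Import ring lra.
Import Order.TTheory GRing.Theory Num.Theory.
Local Open Scope ring_scope.

Section GeometricWeights.
Context {R : realFieldType}.

Lemma bernoulli_ineq (h : R) (m : nat) : -1 <= h -> 1 + m%:R * h <= (1 + h) ^+ m.
Proof.
move=> h_ge; elim: m => [|m IH]; first by rewrite mul0r addr0 expr0.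
rewrite exprSr -natr1.
have := ler_wpM2r (_ : 0 <= 1 + h) IH => /(_ ltac:(lra)).
have : 0 <= m%:R * h * h by rewrite -mulrA mulr_ge0 // -expr2 sqr_ge0.
nra.
Qed.

(* The tangent line at [l] of the convex function [x |-> p^-(x+1)]. *)
Lemma expVn_tangent_le (p : R) (x l : nat) : 1 < p ->
  p^-1 ^+ l.+1 * (1 + (p - 1) * (l%:R - x%:R)) <= p^-1 ^+ x.+1.
Proof.
move=> p_gt1; have p_gt0 : 0 < p by lra.
have invp_gt0 : 0 < p^-1 by rewrite invr_gt0.
have [x_le_l | l_lt_x] := leqP x l.
- rewrite -(subnKC x_le_l) natrD addrAC subrr add0r -addSn exprD.
  rewrite -mulrA -[leRHS]mulr1 ler_pM2l ?exprn_gt0 //.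
  rewrite exprVn mulrC ler_pdivrMr ?exprn_gt0 // mul1r mulrC.
  by have := bernoulli_ineq (p - 1) (l - x); rewrite subrKC; apply; lra.
- rewrite -(subnKC (ltnW l_lt_x)) natrD opprD addrA subrr add0r -addSn exprD.
  rewrite ler_pM2l ?exprn_gt0 //.
  have := bernoulli_ineq (p^-1 - 1) (x - l).
  rewrite subrKC => /(_ ltac:(lra)).
  have : 1 - p <= p^-1 - 1.
    have : p * p^-1 = 1 by rewrite mulfV // gt_eqF.
    have : 0 <= (p - 1) ^+ 2 * p^-1 by rewrite mulr_ge0 ?sqr_ge0 // ltW.
    rewrite expr2; nra.
  have : 0 <= (x - l)%:R :> R by [].
  nra.
Qed.

Lemma geom_partial_sum (p : R) (x : nat) : p != 0 ->
  (p - 1) * \sum_(1 <= j < x.+1) p^-1 ^+ j = 1 - p^-1 ^+ x.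
Proof.
move=> p_neq0.
elim: x => [|x IH]; first by rewrite big_geq // mulr0 expr0 subrr.
by rewrite big_nat_recr //= mulrDr IH exprSr; field.
Qed.

Lemma geom_partial_sum_lt (p : R) (x : nat) : 1 < p ->
  \sum_(1 <= j < x.+1) geom_weights p j < (p - 1)^-1.
Proof.
move=> p_gt1; have p_gt0 : 0 < p by lra.
rewrite (eq_bigr (fun j => p^-1 ^+ j)) => [|j _]; last by rewrite /geom_weights exprVn.
rewrite -[(p - 1)^-1]div1r ltr_pdivlMr ?subr_gt0 // mulrC geom_partial_sum ?gt_eqF //.
by rewrite ltrBlDr ltrDl exprn_gt0 // invr_gt0.
Qed.

End GeometricWeights.

Lemma cardsIU1 {A : finType} (B S : {set A}) (a : A) : a \notin S ->
  #|B :&: (S :|: [set a])| = ((a \in B) + #|B :&: S|)%N.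
Proof.
move=> aNS; rewrite setUC setIUr; have [aB | aNB] := boolP (a \in B).
- by rewrite (setIidPr _) ?sub1set // cardsU1 inE aB (negbTE aNS).
- by rewrite setIC disjoint_setI0 ?set0U // disjoints1.
Qed.

Lemma cohesiveness_mul_le {n} {A : finType} {P : profile n A} {N' : {set 'I_n}}
  {S : {set A}} : \bigcap_(i in N') P i \subset S ->
  (cohesiveness P N' * #|N'| <= \sum_(i in N') #|P i :&: S|)%N.
Proof.
move=> capS; rewrite mulnC -sum_nat_const; apply: leq_sum => i iN.
by apply: subset_leq_card; rewrite subsetI capS (bigcap_inf _ iN).
Qed.

Lemma prefix_set0 {A : finType} (r : seq A) : prefix_set r 0 = set0.
Proof. by apply/setP => x; rewrite !inE take0. Qed.

Lemma prefix_setS {A : finType} (r : seq A) (x0 : A) t : (t < size r)%N ->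
  prefix_set r t.+1 = prefix_set r t :|: [set nth x0 r t].
Proof.
move=> t_lt; rewrite /prefix_set (take_nth x0 t_lt).
by apply/setP => y; rewrite !inE mem_rcons in_cons orbC.
Qed.

Lemma prefix_set_subset {A : finType} (r : seq A) t k : (t <= k)%N ->
  prefix_set r t \subset prefix_set r k.
Proof.
move=> t_le_k; apply/subsetP => y; rewrite !inE -(take_takel _ t_le_k).
exact: mem_take.
Qed.

Section Scores.
Context {R : numDomainType} {n : nat} {A : finType} (w : nat -> R) (P : profile n A).

Lemma wscore_gain (S : {set A}) (a : A) : a \notin S ->
  wscore w P (S :|: [set a]) - wscore w P S =
  \sum_(i < n) (if a \in P i then w (#|P i :&: S|).+1 else 0).
Proof.
move=> aNS; rewrite /wscore -sumrB; apply: eq_bigr => i _.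
rewrite cardsIU1 //; case: (a \in P i).
- by rewrite add1n big_nat_recr //= addrAC subrr add0r.
- by rewrite add0n subrr.
Qed.

Lemma wscore_set0 : wscore w P set0 = 0.
Proof. by rewrite /wscore big1 // => i _; rewrite setI0 cards0 big_geq. Qed.

Lemma wscore_prefix_telescope (r : seq A) (x0 : A) k : (k <= size r)%N ->
  wscore w P (prefix_set r k) =
  \sum_(0 <= t < k) (wscore w P (prefix_set r t :|: [set nth x0 r t])
                     - wscore w P (prefix_set r t)).
Proof.
move=> k_le.
rewrite (eq_big_nat _ _ (F2 := fun t => wscore w P (prefix_set r t.+1)
                                        - wscore w P (prefix_set r t))).
  by rewrite telescope_sumr // prefix_set0 wscore_set0 subr0.
by move=> t /andP [_ t_lt]; rewrite (prefix_setS _ x0) // (leq_trans t_lt).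
Qed.

End Scores.

Lemma mem_ranking {A : finType} (r : seq A) (x : A) : is_ranking r -> x \in r.
Proof.
case=> r_uniq r_size; have [||_ ->] // := uniq_min_size r_uniq (s2 := enum A).
- by move=> y _; rewrite mem_enum.
- by rewrite -cardE r_size.
- by rewrite mem_enum.
Qed.

Lemma ranking_notin_prefix_lt {A : finType} {r : seq A} {c : A} {k : nat} :
  is_ranking r -> c \notin prefix_set r k -> (k < size r)%N.
Proof.
move=> /(mem_ranking _ c) cr; rewrite inE (in_take _ cr) -leqNgt => k_le.
by apply: leq_ltn_trans k_le _; rewrite index_mem.
Qed.

Section GeometricScores.
Context {R : realFieldType} {p : R} (p_gt1 : 1 < p) {n : nat} {A : finType}.
Variable P : profile n A.

Lemma geom_wscore_lt (S : {set A}) : (0 < n)%N ->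
  wscore (geom_weights p) P S < n%:R / (p - 1).
Proof.
case: n P => // m Q _; rewrite /wscore big_ord_recl.
rewrite (_ : m.+1%:R / (p - 1) = (p - 1)^-1 + \sum_(i < m) (p - 1)^-1); last first.
  by rewrite sumr_const card_ord -mulrS mulrC mulr_natr.
apply: ltr_leD; first exact: geom_partial_sum_lt.
by apply: ler_sum => i _; apply/ltW/geom_partial_sum_lt.
Qed.

(* Summing the tangent bound [expVn_tangent_le] over [N'] makes the linear terms
   nonnegative, since the members of [N'] approve at most [l |N'|] elements of S. *)
Lemma geom_gain_ge (S : {set A}) (a : A) (N' : {set 'I_n}) (l : nat) :
  a \notin S -> (forall i, i \in N' -> a \in P i) ->
  (\sum_(i in N') #|P i :&: S| <= l * #|N'|)%N ->
  #|N'|%:R * p^-1 ^+ l.+1 <=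
    wscore (geom_weights p) P (S :|: [set a]) - wscore (geom_weights p) P S.
Proof.
move=> aNS aN sum_le; rewrite wscore_gain //.
have invp_ge0 : 0 <= p^-1 by rewrite invr_ge0 ltW // (lt_trans ltr01).
rewrite (bigID (mem N')) /= -[leLHS]addr0; apply: lerD; last first.
  apply: sumr_ge0 => i _; case: ifP => // _.
  by rewrite /geom_weights -exprVn exprn_ge0.
rewrite (eq_bigr (fun i => p^-1 ^+ (#|P i :&: S|).+1)) => [|i iN]; last first.
  by rewrite aN // /geom_weights exprVn.
apply: le_trans (ler_sum _ (fun i _ => expVn_tangent_le _ #|P i :&: S| l p_gt1)).
set d := fun i : 'I_n => l%:R - (#|P i :&: S|)%:R : R.
have d_ge0 : 0 <= \sum_(i in N') d i.
  by rewrite sumrB sumr_const -natr_sum subr_ge0 -mulrnA ler_nat.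
rewrite (eq_bigr (fun i => p^-1 ^+ l.+1 + p^-1 ^+ l.+1 * (p - 1) * d i)) => [|i _];
  last by rewrite /d; ring.
rewrite big_split /= sumr_const -mulr_sumr mulr_natl lerDl.
by rewrite !mulr_ge0 ?exprn_ge0 // subr_ge0 ltW.
Qed.

Lemma geom_wRAV_prefix_wscore_ge {r : seq A} {c : A} {N' : {set 'I_n}} {l k : nat} :
  wRAV_output (geom_weights p) P r ->
  (forall i, i \in N' -> c \in P i) -> c \notin prefix_set r k ->
  (\sum_(i in N') #|P i :&: prefix_set r k| <= l * #|N'|)%N ->
  k%:R * (#|N'|%:R * p^-1 ^+ l.+1) <= wscore (geom_weights p) P (prefix_set r k).
Proof.
move=> [r_rank r_max] cN cNk sum_le.
have k_lt := ranking_notin_prefix_lt r_rank cNk.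
rewrite (wscore_prefix_telescope _ _ _ c _ (ltnW k_lt)).
rewrite -[k in k%:R]subn0 mulr_natl -sumr_const_nat.
apply: ler_sum_nat => t /andP [_ t_lt].
have tk := prefix_set_subset r _ _ (ltnW t_lt).
have cNt : c \notin prefix_set r t by apply: contra cNk; apply: (subsetP tk).
apply: le_trans (r_max t (ltn_trans t_lt k_lt) c c _); last by rewrite inE in cNt.
apply: geom_gain_ge cNt cN (leq_trans _ sum_le).
by apply: leq_sum => i _; apply/subset_leq_card/setIS.
Qed.

End GeometricScores.

Lemma significant_card_ge {R : numFieldType} {n} {A : finType} {P : profile n A}
  {alpha : rat} {lambda : nat} {N' : {set 'I_n}} :
  significant P alpha lambda N' -> ratr alpha * n%:R <= #|N'|%:R :> R.
Proof.
case=> card_N' _.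
have -> : #|N'|%:R = ratr (Num.ceil (alpha * n%:R))%:~R :> R by rewrite ratr_int -card_N'.
by rewrite -ratr_nat -rmorphM ler_rat ceil_ge.
Qed.

(* Where the constant kappa comes from: k |N'| p^-(lambda+1) >= n / (p - 1). *)
Lemma kappa_geom_ge {R : archiRealFieldType} {p : R} {alpha : rat} (lambda : nat) {n N : nat} :
  1 < p -> 0 < alpha -> ratr alpha * n%:R <= N%:R :> R ->
  n%:R / (p - 1) <=
    (absz (Num.ceil (p ^+ lambda.+1 / (ratr alpha * (p - 1)))))%:R
      * (N%:R * p^-1 ^+ lambda.+1).
Proof.
move=> p_gt1 alpha_gt0 N_ge.
set x := p ^+ lambda.+1 / _.
have a_gt0 : 0 < ratr alpha :> R by rewrite ltr0q.
have p_gt0 : 0 < p by lra.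
have x_gt0 : 0 < x by rewrite divr_gt0 ?exprn_gt0 // mulr_gt0 // subr_gt0.
have x_le : x <= (absz (Num.ceil x))%:R.
  by rewrite natr_absz ger0_norm ?ceil_ge // ceil_ge0; lra.
have -> : n%:R / (p - 1) = x * (ratr alpha * n%:R * p^-1 ^+ lambda.+1).
  have : p ^+ lambda.+1 != 0 by rewrite expf_neq0 // gt_eqF.
  have : p - 1 != 0 by rewrite gt_eqF // subr_gt0.
  rewrite /x exprVn; move: a_gt0; rewrite lt0r => /andP [a_neq0 _] *; field.
  by apply/and3P.
have q_ge0 : 0 <= p^-1 ^+ lambda.+1 by rewrite exprn_ge0 // invr_ge0 ltW.
apply: ler_pM => //; first exact: ltW.
  by rewrite mulr_ge0 // mulr_ge0 // ltW.
by rewrite ler_wpM2r.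
Qed.

Theorem theorem5 (R : archiRealFieldType) (p : R) (hp : 1 < p)
  (alpha : rat) (halpha0 : 0 < alpha) (halpha1 : alpha <= 1) (lambda : nat)
  (n : nat) (hn : (0 < n)%N) (A : finType) (P : profile n A) (hP : valid_profile P)
  (r : seq A) (hr : wRAV_output (geom_weights p) P r)
  (N' : {set 'I_n}) (hN' : significant P alpha lambda N') :
  lambda%:R <=
    @avg R n A P N'
      (prefix_set r `|Num.ceil (p ^+ lambda.+1 / (ratr alpha * (p - 1)))|%N).
Proof.
set k := `|_|%N; set Sk := prefix_set r k.
have N'_ge : ratr alpha * n%:R <= #|N'|%:R :> R := significant_card_ge hN'.
have N'_gt0 : (0 < #|N'|)%N.
  by rewrite -(ltr0n R); apply: lt_le_trans N'_ge; rewrite mulr_gt0 ?ltr0q ?ltr0n.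
rewrite /avg ler_pdivlMr ?ltr0n // -natrM ler_nat.
have [capS | /subsetPn [c cap_c cNS]] := boolP (\bigcap_(i in N') P i \subset Sk).
  by apply: leq_trans _ (cohesiveness_mul_le capS); rewrite leq_mul2r hN'.2 orbT.
rewrite leqNgt; apply/negP => /ltnW sum_le.
have cN i : i \in N' -> c \in P i by move=> iN; apply: subsetP (bigcap_inf _ iN) _ cap_c.
have := geom_wRAV_prefix_wscore_ge hp P hr cN cNS sum_le.
have := geom_wscore_lt hp P Sk hn.
have := kappa_geom_ge lambda hp halpha0 N'_ge.
rewrite -/k; lra.
Qed.
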